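(* Let $B = M \cup \{\omega_1,\ldots,\omega_p\}$ with $p\ge1$ and $\omega_i\in P_2\setminus M$, and let $r(B)=\max\{d(\omega_1),\ldots,d(\omega_p)\}$. Then for every finite system $F$ of Boolean functions of variables $x_1,\ldots,x_n$, $$d(F)\le (2r(B)+1)\left(2^{I_B(F)}-1\right).$$
   Context: $P_2$ denotes the set of all Boolean functions and $M\subset P_2$ the set of all monotone Boolean functions (including the constants). Tuples in $\{0,1\}^n$ are compared componentwise. An increasing chain is a sequence of pairwise distinct tuples $\tilde\alpha_1,\ldots,\tilde\alpha_r\in\{0,1\}^n$ with $\tilde\alpha_i\le\tilde\alpha_{i+1}$ for all $i$. For a Boolean function $f$, a pair $(\tilde\alpha,\tilde\beta)$ with $\tilde\alpha\le\tilde\beta$ and $f(\tilde\alpha)>f(\tilde\beta)$ is a jump of $f$; a pair is a jump of a system $F$ if it is a jump of some $f\in F$. For a chain $C=(\tilde\alpha_1,\ldots,\tilde\alpha_r)$, $d_C(F)$ is the number of $i$ with $(\tilde\alpha_i,\tilde\alpha_{i+1})$ a jump of $F$, and $d(F)=\max_C d_C(F)$ over all chains; $d(f)=d(\{f\})$. A circuit over $B$ is a Boolean circuit with inputs $x_1,\ldots,x_n$ whose gates compute functions of $B$; gates computing functions in $M$ have weight $0$ and gates computing some $\omega_i$ have weight $1$. $I_B(F)$ is the minimum total weight of a circuit over $B$ realizing all functions of $F$. *)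

From mathcomp Require Import all_boot.
Set Implicit Arguments. Unset Strict Implicit. Unset Printing Implicit Defensive.

(* Boolean functions of k variables x_1..x_k (x_i is component i-1 of the tuple). *)
Definition bfun (k : nat) := k.-tuple bool -> bool.

Definition tle {k} (a b : k.-tuple bool) : bool :=
  [forall i : 'I_k, tnth a i ==> tnth b i].

Definition monotone {k} (f : bfun k) : Prop := forall a b, tle a b -> f a ==> f b.

Definition is_jump {k} (f : bfun k) (a b : k.-tuple bool) : bool :=
  [&& tle a b, f a & ~~ f b].

Definition is_jumpF {k} (F : seq (bfun k)) (a b : k.-tuple bool) : bool :=
  has (fun f => is_jump f a b) F.

Definition is_chain {k} (s : seq (k.-tuple bool)) : bool := uniq s && sorted tle s.

Definition dC {k} (F : seq (bfun k)) (s : seq (k.-tuple bool)) : nat :=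
  count (fun ab => is_jumpF F ab.1 ab.2) (zip s (behead s)).

(* d(F) = max over all chains; a chain is duplicate-free, so its length is at most 2^k *)
Definition dsys {k} (F : seq (bfun k)) : nat :=
  \max_(m < (2 ^ k).+1) \max_(s : m.-tuple (k.-tuple bool) | is_chain s) dC F s.

Definition app {k} (f : bfun k) (s : seq bool) : bool :=
  if insub s is Some t then f t else false.

Inductive glabel (p : nat) :=
  | GMon (k : nat) (f : bfun k)
  | GOm (i : 'I_p).

Record gate (p : nat) := Gate { glab : glabel p; gins : seq nat }.

Definition circuit (p : nat) := seq (gate p).

Section Circ.
Variables (p : nat) (ar : 'I_p -> nat) (om : forall i : 'I_p, bfun (ar i)).

Definition garity (g : gate p) : nat :=
  match glab g with GMon k _ => k | GOm i => ar i end.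

Definition glab_ok (l : glabel p) : Prop :=
  match l with GMon k f => monotone f | GOm _ => True end.

(* nodes 0..n-1 are the inputs x_1..x_n; node n+j is the j-th gate, whose
   inputs must be earlier nodes *)
Definition wf_circuit (n : nat) (C : circuit p) : Prop :=
  forall j g, onth C j = Some g ->
    [/\ glab_ok (glab g), size (gins g) = garity g & all (fun m => m < n + j) (gins g)].


Definition eval_gate (g : gate p) (vs : seq bool) : bool :=
  let args := map (fun m => nth false vs m) (gins g) in
  match glab g with GMon k f => app f args | GOm i => @app (ar i) (@om i) args end.

Definition node_vals (n : nat) (C : circuit p) (x : n.-tuple bool) : seq bool :=
  foldl (fun vs g => rcons vs (eval_gate g vs)) (val x) C.

Definition node_fun (n : nat) (C : circuit p) (m : nat) : bfun n :=
  fun x => nth false (node_vals C x) m.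

Definition realizes (n : nat) (C : circuit p) (F : seq (bfun n)) : Prop :=
  forall j, j < size F ->
    exists m, m < n + size C /\ forall x, nth (fun _ => false) F j x = node_fun C m x.

Definition weight (C : circuit p) : nat :=
  count (fun g => if glab g is GOm _ then true else false) C.

Definition IB_is (n : nat) (F : seq (bfun n)) (I : nat) : Prop :=
  (exists C, [/\ wf_circuit n C, realizes C F & weight C = I]) /\
  (forall C, wf_circuit n C -> realizes C F -> I <= weight C).

Definition rB : nat := \max_(i < p) dsys [:: @om i].
End Circ.

(** A circuit whose gates are all monotone computes only monotone functions, so no
    step of a chain is a jump of any of its nodes.  Otherwise cut the circuit at its
    first gate computing some [omega_i]: its value [G] is [omega_i] composed with a
    monotone map, hence along a chain [G] drops at most [r(B)] times and changes at
    most [2 r(B) + 1] times.  A step of the chain on which [G] keeps the constant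
    value [c] is a step of the subchain where [G = c], and on it the circuit agrees
    with the one where the gate is replaced by the constant [c], which has one
    non-monotone gate less.  By induction on the weight [w] the number of jumps is
    thus at most [2 (2 r(B) + 1) (2^(w-1) - 1) + 2 r(B) + 1 = (2 r(B) + 1) (2^w - 1)]. *)

From mathcomp Require Import all_boot zify.
Set Implicit Arguments. Unset Strict Implicit. Unset Printing Implicit Defensive.

Section CountAdj.
Variable T : Type.
Implicit Types (P Q R : rel T) (s t : seq T) (x y : T).

(* [dC F s] is convertible to [count_adj (is_jumpF F) s]. *)
Definition count_adj P s := count (fun ab => P ab.1 ab.2) (zip s (behead s)).

Lemma count_adj_cons2 P x y t :
  count_adj P [:: x, y & t] = P x y + count_adj P (y :: t).
Proof. by []. Qed.

Lemma eq_count_adj P Q : P =2 Q -> count_adj P =1 count_adj Q.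
Proof. by move=> PQ s; apply: eq_count => ab; apply: PQ. Qed.

Lemma count_adj_cons P x s : count_adj P s <= count_adj P (x :: s).
Proof. by case: s => // y s; rewrite count_adj_cons2 leq_addl. Qed.

Lemma sub_count_adj P Q s : subrel P Q -> count_adj P s <= count_adj Q s.
Proof. by move=> PQ; apply: sub_count => ab /PQ. Qed.

Lemma count_adj_or P Q s :
  count_adj (fun a b => P a b || Q a b) s <= count_adj P s + count_adj Q s.
Proof.
by rewrite /count_adj -(count_predUI (fun ab => P ab.1 ab.2)) leq_addr.
Qed.

Lemma count_adj_sorted R P s :
  sorted R s -> count_adj P s = count_adj (fun a b => R a b && P a b) s.
Proof.
elim: s => [|x [|y t] IH] //= /andP[Rxy /IH].
by rewrite !count_adj_cons2 Rxy => ->.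
Qed.

Lemma count_adj_filter (q : pred T) P s :
  count_adj (fun a b => [&& q a, q b & P a b]) s <= count_adj P (filter q s).
Proof.
elim: s => [|x [|y t] IH] //; rewrite count_adj_cons2 [filter q (x :: _)]/=.
case: (boolP (q x)) => qx; last by rewrite add0n.
move: IH; rewrite [filter q (y :: _)]/=; case: (boolP (q y)) => qy IH.
  by rewrite count_adj_cons2 leq_add2l.
by rewrite add0n (leq_trans IH) ?count_adj_cons.
Qed.

Lemma count_adj_changes (G : pred T) s :
  count_adj (fun a b => G a != G b) s
    <= 2 * count_adj (fun a b => G a && ~~ G b) s + 1.
Proof.
pose rises := count_adj (fun a b => ~~ G a && G b).
pose drops := count_adj (fun a b => G a && ~~ G b).
case: s => [|x t] //.
have rises_drops : rises (x :: t) + G x = drops (x :: t) + G (last x t).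
  elim: t x => [|y t IH] x //; move: (IH y).
  by rewrite /rises /drops !count_adj_cons2 /=; case: (G x); case: (G y) => /=; lia.
have -> : count_adj (fun a b => G a != G b) (x :: t) = rises (x :: t) + drops (x :: t).
  elim: t x {rises_drops} => [|y t IH] x //; move: (IH y).
  by rewrite /rises /drops !count_adj_cons2 => ->; case: (G x); case: (G y) => /=; lia.
move: rises_drops; rewrite /rises /drops.
by case: (G x); case: (G (last x t)) => /=; lia.
Qed.

Lemma count_adj_split (G : pred T) (J J0 J1 : rel T) s :
    (forall a b, ~~ G a -> ~~ G b -> J a b -> J0 a b) ->
    (forall a b, G a -> G b -> J a b -> J1 a b) ->
  count_adj J s <= count_adj J0 (filter (predC G) s) + count_adj J1 (filter G s)
                   + count_adj (fun a b => G a != G b) s.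
Proof.
move=> J0J J1J.
pose K a b := [&& ~~ G a, ~~ G b & J0 a b] || [&& G a, G b & J1 a b].
apply: (@leq_trans (count_adj (fun a b => K a b || (G a != G b)) s)).
  apply: sub_count_adj => a b Jab; rewrite /K.
  by case Ga: (G a); case Gb: (G b); rewrite /= ?J0J ?J1J ?Ga ?Gb ?orbT.
apply: leq_trans (count_adj_or _ _ _) _; rewrite leq_add2r.
apply: leq_trans (count_adj_or _ _ _) _.
by apply: leq_add; apply: count_adj_filter.
Qed.

Lemma count_adj_pred0 s : count_adj (fun _ _ => false) s = 0.
Proof. exact: count_pred0. Qed.

End CountAdj.

Lemma count_adj_map (T U : Type) (f : U -> T) (P : rel T) (s : seq U) :
  count_adj P (map f s) = count_adj (fun a b => P (f a) (f b)) s.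
Proof. by elim: s => [|x [|y t] IH] //; rewrite [map f _]/= !count_adj_cons2 IH. Qed.

Fixpoint squash (T : eqType) (x : T) (t : seq T) : seq T :=
  if t is y :: t' then if x == y then squash y t' else y :: squash y t' else [::].

Lemma count_adj_squash (T : eqType) (P : rel T) x t :
  irreflexive P -> count_adj P (x :: squash x t) = count_adj P (x :: t).
Proof.
move=> Pirr; elim: t x => [|y t IH] x //=; rewrite count_adj_cons2 -IH.
by case: eqP => [<-|_]; rewrite ?Pirr ?count_adj_cons2.
Qed.

Lemma path_squash (T : eqType) (R : rel T) x t :
  path R x t -> path (fun a b => (a != b) && R a b) x (squash x t).
Proof.
elim: t x => [|y t IH] x //= /andP[Rxy /IH Pt].
by case: eqP => [->|/eqP nxy] //=; rewrite nxy Rxy.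
Qed.

Section Chains.
Variable k : nat.
Implicit Types (a b c : k.-tuple bool) (F : seq (bfun k)) (s : seq (k.-tuple bool)).

Lemma tle_trans : transitive (@tle k).
Proof.
move=> b a c /forallP ab /forallP bc; apply/forallP => i.
by apply/implyP => /(implyP (ab i)) /(implyP (bc i)).
Qed.

Lemma tle_anti a b : tle a b -> tle b a -> a = b.
Proof.
move=> /forallP ab /forallP ba; apply: eq_from_tnth => i.
by move: (ab i) (ba i); case: (tnth a i); case: (tnth b i).
Qed.

Lemma leq_dC_dsys F s : is_chain s -> dC F s <= dsys F.
Proof.
move=> /[dup] /andP[us _] chs.
have szs : size s < (2 ^ k).+1.
  rewrite ltnS -(card_uniqP us); apply: leq_trans (max_card _) _.
  by rewrite card_tuple card_bool.
apply: leq_trans (leq_bigmax (Ordinal szs)); rewrite /=.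
exact: leq_bigmax_cond (in_tuple s) chs.
Qed.

Lemma dsys_le F N : (forall s, is_chain s -> dC F s <= N) -> dsys F <= N.
Proof.
by move=> dCN; apply/bigmax_leqP => m _; apply/bigmax_leqP => s /dCN.
Qed.

Lemma count_drops_le_dsys (f : bfun k) s :
  sorted tle s -> count_adj (fun a b => f a && ~~ f b) s <= dsys [:: f].
Proof.
case: s => [|x t] // ss; pose c := x :: squash x t.
have ltc : sorted (fun a b => (a != b) && tle a b) c by apply: path_squash.
have lec : sorted tle c by apply: sub_sorted ltc => a b /andP[].
have chc : is_chain c.
  rewrite /is_chain lec andbT; apply: sorted_uniq ltc; last by move=> a; rewrite eqxx.
  move=> b a d /andP[ab lab] /andP[bd lbd]; rewrite (tle_trans lab lbd) andbT.
  by apply: contraNneq ab => ad; rewrite ad in lab *; rewrite (tle_anti lab lbd).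
rewrite -count_adj_squash; last by move=> a; case: (f a).
rewrite (count_adj_sorted _ lec); apply: leq_trans (leq_dC_dsys [:: f] chc).
by apply: sub_count_adj => a b; rewrite /is_jumpF /= orbF.
Qed.

End Chains.

Definition gate_args (k : nat) (ins : seq nat) (V : seq bool) : k.-tuple bool :=
  insubd (nseq_tuple k false) (map (nth false V) ins).

Lemma app_gate_args k (f : bfun k) ins V :
  size ins = k -> app f (map (nth false V) ins) = f (gate_args k ins V).
Proof.
move=> szins; rewrite /app /gate_args /insubd.
by case: insubP => //=; rewrite size_map szins eqxx.
Qed.

Lemma tle_gate_args k ins V W :
    size ins = k -> (forall m, nth false V m ==> nth false W m) ->
  tle (gate_args k ins V) (gate_args k ins W).
Proof.
move=> szins VW; apply/forallP => i.
have szmap U : size (map (nth false U) ins) == k by rewrite size_map szins.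
rewrite !(tnth_nth false) /gate_args !insubdK; try exact: szmap.
by rewrite !(nth_map 0) ?szins.
Qed.

Section Circuits.
Variables (p : nat) (ar : 'I_p -> nat) (om : forall i : 'I_p, bfun (ar i)) (n : nat).
Implicit Types (C pre post : circuit p) (g : gate p) (x a b : n.-tuple bool).

Definition const_gate (c : bool) : gate p := Gate (@GMon p 0 (fun _ => c)) [::].

Definition node_jump C a b : bool :=
  has (fun m => node_fun om C m a && ~~ node_fun om C m b) (iota 0 (n + size C)).

Lemma size_node_vals C x : size (node_vals om C x) = n + size C.
Proof.
elim/last_ind: C => [|C g IH]; first by rewrite size_tuple addn0.
by rewrite /node_vals foldl_rcons size_rcons -/(node_vals _ _ _) IH size_rcons addnS.
Qed.

Lemma node_vals_rcons C g x :
  node_vals om (rcons C g) x =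
    rcons (node_vals om C x) (eval_gate om g (node_vals om C x)).
Proof. by rewrite /node_vals foldl_rcons. Qed.

Definition gate_val pre g x : bool := eval_gate om g (node_vals om pre x).

Lemma eval_const_gate c vs : eval_gate om (const_gate c) vs = c.
Proof. by rewrite /eval_gate /= /app; case: insubP => //=. Qed.

Lemma node_vals_const_gate pre g post c x :
  gate_val pre g x = c ->
  node_vals om (pre ++ g :: post) x = node_vals om (pre ++ const_gate c :: post) x.
Proof.
rewrite /gate_val /node_vals -!cat_rcons !foldl_cat !foldl_rcons => ->.
by rewrite eval_const_gate.
Qed.

Lemma node_jump_const_gate pre g post c a b :
  gate_val pre g a = c -> gate_val pre g b = c ->
  node_jump (pre ++ g :: post) a b = node_jump (pre ++ const_gate c :: post) a b.
Proof.
move=> ga gb; rewrite /node_jump /node_fun !size_cat.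
by rewrite (node_vals_const_gate _ ga) (node_vals_const_gate _ gb).
Qed.

Lemma wf_circuit_prefix pre post : wf_circuit ar n (pre ++ post) -> wf_circuit ar n pre.
Proof.
move=> wfC j g jg; apply: wfC; rewrite onth_cat.
by have := onthTE pre j; rewrite jg => <-.
Qed.

Lemma wf_circuit_gate pre g post : wf_circuit ar n (pre ++ g :: post) ->
  glab_ok (glab g) /\ size (gins g) = garity ar g.
Proof. by move=> wfC; have [] := wfC (size pre) g; rewrite ?onth_cat ?ltnn ?subnn. Qed.

Lemma wf_circuit_const_gate pre g post c :
  wf_circuit ar n (pre ++ g :: post) -> wf_circuit ar n (pre ++ const_gate c :: post).
Proof.
move=> wfC j h; rewrite onth_cat; case: ltnP => jpre.
  by move=> jh; apply: wfC; rewrite onth_cat jpre.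
case E: (j - size pre) => [|i] /=; first by case=> <-; split=> // ? ? _; exact: implybb.
by move=> ih; apply: wfC; rewrite onth_cat ltnNge jpre /= E.
Qed.

Lemma node_vals_mono C a b : wf_circuit ar n C -> weight C = 0 -> tle a b ->
  forall m, nth false (node_vals om C a) m ==> nth false (node_vals om C b) m.
Proof.
move=> + + ab; elim/last_ind: C => [|C g IH] wfC wC m.
  case: (ltnP m n) => mn; last by rewrite nth_default ?size_tuple.
  by rewrite -!(tnth_nth false _ (Ordinal mn)); move/forallP: ab; apply.
rewrite -cats1 in wfC wC; move/eqP: wC; rewrite /weight count_cat addn_eq0.
move=> /andP[/eqP wC wg].
rewrite !node_vals_rcons !nth_rcons !size_node_vals.
case: ltnP => _; first by apply: IH => //; apply: wf_circuit_prefix wfC.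
case: eqP => // _; have [okg szg] := wf_circuit_gate wfC.
move: wg okg szg; rewrite /eval_gate /garity /=; case: (glab g) => // k f _ mf szg.
rewrite !app_gate_args //; apply: mf; apply: tle_gate_args => //.
by apply: IH => //; apply: wf_circuit_prefix wfC.
Qed.

Lemma no_node_jump_weight0 C a b :
  wf_circuit ar n C -> weight C = 0 -> tle a b -> ~~ node_jump C a b.
Proof.
move=> wfC wC ab; apply/hasPn => m _; have := node_vals_mono wfC wC ab m.
by rewrite /node_fun; case: nth; case: nth.
Qed.

Lemma count_node_jumps_weight0 C s :
  wf_circuit ar n C -> weight C = 0 -> sorted tle s -> count_adj (node_jump C) s = 0.
Proof.
move=> wfC wC ss; apply/eqP; rewrite -leqn0 (count_adj_sorted _ ss).
rewrite -(count_adj_pred0 s); apply: sub_count_adj => a b /andP[ab].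
by rewrite (negbTE (no_node_jump_weight0 wfC wC ab)).
Qed.

Lemma node_jump_realizes C F a b : realizes om C F -> is_jumpF F a b -> node_jump C a b.
Proof.
move=> realC /(has_nthP (fun _ => false)) [j jF].
have [m [mC Fm]] := realC j jF; rewrite /is_jump !Fm => /and3P[_ ma nmb].
by apply/hasP; exists m; rewrite ?mem_iota ?ma.
Qed.

Lemma first_om_gate C : 0 < weight C ->
  exists pre i ins post, C = pre ++ Gate (GOm i) ins :: post /\ weight pre = 0.
Proof.
elim: C => [|g C IH] //; case: g => [[k f|i] ins] /=; last first.
  by move=> _; exists [::], i, ins, C.
move=> /IH [pre [i [ins' [post [-> wpre]]]]].
by exists (Gate (GMon p f) ins :: pre), i, ins', post.
Qed.

Lemma count_drops_om_gate pre i ins s :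
    wf_circuit ar n pre -> weight pre = 0 -> size ins = ar i -> sorted tle s ->
  count_adj (fun a b => gate_val pre (Gate (GOm i) ins) a &&
                        ~~ gate_val pre (Gate (GOm i) ins) b) s <= rB om.
Proof.
move=> wfpre wpre szins ss.
pose args a := gate_args (ar i) ins (node_vals om pre a).
have Gargs a : gate_val pre (Gate (GOm i) ins) a = @om i (args a).
  by rewrite /gate_val /eval_gate /= app_gate_args.
rewrite (eq_count_adj (Q := fun a b => @om i (args a) && ~~ @om i (args b))); last first.
  by move=> a b; rewrite !Gargs.
rewrite -(count_adj_map args (fun u v => @om i u && ~~ @om i v)).
apply: leq_trans (count_drops_le_dsys _ _) (leq_bigmax i).
rewrite sorted_map; apply: sub_sorted ss => a b ab; apply: tle_gate_args => //.
exact: node_vals_mono wfpre wpre ab.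
Qed.

Lemma count_node_jumps w C s : wf_circuit ar n C -> weight C = w -> sorted tle s ->
  count_adj (node_jump C) s <= (2 * rB om + 1) * (2 ^ w - 1).
Proof.
elim: w C s => [|w IH] C s wfC wC ss; first by rewrite count_node_jumps_weight0.
case: (@first_om_gate C) => [|pre [i [ins [post [EC wpre]]]]]; first by rewrite wC.
subst C; pose G := gate_val pre (Gate (GOm i) ins).
pose Cc c := pre ++ const_gate c :: post.
have jumps_split : count_adj (node_jump (pre ++ Gate (GOm i) ins :: post)) s <=
    count_adj (node_jump (Cc false)) (filter (predC G) s) +
    count_adj (node_jump (Cc true)) (filter G s) + count_adj (fun a b => G a != G b) s.
  apply: count_adj_split => a b; [move=> /negbTE Ga /negbTE Gb | move=> Ga Gb];
    by rewrite (node_jump_const_gate _ Ga Gb).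
have IHc c q :
    count_adj (node_jump (Cc c)) (filter q s) <= (2 * rB om + 1) * (2 ^ w - 1).
  apply: IH; first exact: wf_circuit_const_gate wfC.
    by move: wC wpre; rewrite /weight !count_cat /=; lia.
  by apply: sorted_filter ss; apply: tle_trans.
have G_drops : count_adj (fun a b => G a && ~~ G b) s <= rB om.
  apply: count_drops_om_gate => //; first exact: wf_circuit_prefix wfC.
  exact: (wf_circuit_gate wfC).2.
have := count_adj_changes G s; rewrite expnS.
have e_pos : 0 < 2 ^ w by rewrite expn_gt0.
move: jumps_split (IHc false (predC G)) (IHc true G) G_drops e_pos.
set e := 2 ^ w; set r := rB om; nia.
Qed.

End Circuits.

Theorem lemma1 (p : nat) (ar : 'I_p -> nat) (om : forall i : 'I_p, bfun (ar i))
  (hp : 0 < p) (hom : forall i : 'I_p, ~ monotone (om i))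
  (n : nat) (F : seq (bfun n)) (I : nat) (hI : IB_is om F I) :
  dsys F <= (2 * rB om + 1) * (2 ^ I - 1).
Proof.
have [[C [wfC realC <-]] _] := hI.
apply: dsys_le => s /andP[_ ss]; apply: leq_trans (count_node_jumps om wfC erefl ss).
by apply: sub_count_adj => a b; apply: node_jump_realizes realC.
Qed.
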